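(* Let $H$ and $H'$ be hypergraphs. If $H'$ dilutes to $H$ (i.e., $H$ is a hypergraph dilution of $H'$), then $\mathrm{ghw}(H) \leq \mathrm{ghw}(H')$.
   Context: A hypergraph $H$ is a pair $(V(H),E(H))$ with $E(H)\subseteq 2^{V(H)}$ a set of hyperedges (so identical edges coincide). For a vertex $v$, $I_v$ denotes the set of edges containing $v$. A hypergraph $H$ is a hypergraph dilution of $H'$ (equivalently, $H'$ dilutes to $H$) if $H$ is isomorphic to a hypergraph reachable from $H'$ by a finite sequence of the following operations: (1) deleting a vertex (from the vertex set and from all edges); (2) deleting an edge that is a proper subset of another edge; (3) merging on a vertex $v$: replacing all edges in $I_v$ by the single new edge $(\bigcup I_v)\setminus\{v\}$. A tree decomposition of $H$ is a pair $(T,(B_u)_{u\in T})$ with $T$ a tree and $B_u\subseteq V(H)$ such that every edge of $H$ is contained in some $B_u$ and for every vertex $v$ the set $\{u : v\in B_u\}$ is connected in $T$. For $B\subseteq V(H)$, $\rho_H(B)$ is the minimum number of edges of $H$ whose union contains $B$. The generalised hypertree width $\mathrm{ghw}(H)$ is the minimum over all tree decompositions of $\max_u \rho_H(B_u)$. *)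

From Stdlib Require Import Relations.Relation_Operators.
From mathcomp Require Import all_boot.

Set Implicit Arguments.
Unset Strict Implicit.
Unset Printing Implicit Defensive.

(* A hypergraph over the ambient finite type T: a vertex set V(H) and a set
   of hyperedges E(H) (a set of sets, so identical edges coincide). *)
Record hypergraph (T : finType) := Hypergraph {
  hvert : {set T};
  hedge : {set {set T}} }.

Definition wf_hypergraph (T : finType) (H : hypergraph T) : Prop :=
  forall e, e \in hedge H -> e \subset hvert H.

Definition incident (T : finType) (H : hypergraph T) (v : T) : {set {set T}} :=
  [set e in hedge H | v \in e].

Definition delete_vertex (T : finType) (H : hypergraph T) (v : T) : hypergraph T :=
  Hypergraph (hvert H :\ v) [set e :\ v | e in hedge H].

Definition delete_edge (T : finType) (H : hypergraph T) (e : {set T}) : hypergraph T :=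
  Hypergraph (hvert H) (hedge H :\ e).

Definition merge_vertex (T : finType) (H : hypergraph T) (v : T) : hypergraph T :=
  Hypergraph (hvert H)
    ((hedge H :\: incident H v) :|: [set (\bigcup_(e in incident H v) e) :\ v]).

Inductive dilution_step (T : finType) : hypergraph T -> hypergraph T -> Prop :=
  | DS_delete_vertex H v : v \in hvert H -> dilution_step H (delete_vertex H v)
  | DS_delete_edge H e f : e \in hedge H -> f \in hedge H -> e \proper f ->
      dilution_step H (delete_edge H e)
  | DS_merge H v : v \in hvert H -> dilution_step H (merge_vertex H v).

Definition dilution_reachable (T : finType) : hypergraph T -> hypergraph T -> Prop :=
  clos_refl_trans (hypergraph T) (@dilution_step T).

Definition hg_iso (T1 T2 : finType) (H1 : hypergraph T1) (H2 : hypergraph T2) : Prop :=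
  exists f : T1 -> T2,
    {in hvert H1 &, injective f} /\
    f @: hvert H1 = hvert H2 /\
    hedge H2 = [set f @: (e : {set T1}) | e in hedge H1].

Definition dilutes_to (T' T : finType) (H' : hypergraph T') (H : hypergraph T) : Prop :=
  exists H'' : hypergraph T', dilution_reachable H' H'' /\ hg_iso H H''.

(* A (finite, nonempty) tree on node type I with edge relation t:
   t symmetric and irreflexive, connected, and acyclic (every edge is a
   bridge: removing the edge {x,y} disconnects x from y). *)
Definition is_tree (I : finType) (t : rel I) : Prop :=
  [/\ 0 < #|I|, symmetric t, irreflexive t,
      (forall x y, connect t x y) &
      (forall x y, t x y ->
         ~~ connect [rel a b | t a b && ~~ (((a == x) && (b == y)) || ((a == y) && (b == x)))] x y)].

Definition tree_decomposition (T : finType) (H : hypergraph T)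
    (I : finType) (t : rel I) (B : I -> {set T}) : Prop :=
  [/\ is_tree t,
      (forall u, B u \subset hvert H),
      (forall e, e \in hedge H -> exists u, e \subset B u) &
      (forall v, v \in hvert H -> forall u w, v \in B u -> v \in B w ->
         connect [rel a b | t a b && (v \in B a) && (v \in B b)] u w)].

Definition rho_le (T : finType) (H : hypergraph T) (B : {set T}) (k : nat) : Prop :=
  exists F : {set {set T}}, [/\ F \subset hedge H, #|F| <= k & B \subset \bigcup_(e in F) e].

Definition ghw_le (T : finType) (H : hypergraph T) (k : nat) : Prop :=
  exists (I : finType) (t : rel I) (B : I -> {set T}),
    tree_decomposition H t B /\ forall u, rho_le H (B u) k.

From mathcomp Require Import all_boot.

Set Implicit Arguments.
Unset Strict Implicit.
Unset Printing Implicit Defensive.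

(* Each dilution operation, and pulling back along an isomorphism, acts on a
   tree decomposition bag by bag through one set map [bag] on the same tree,
   while a cover of a bag by edges is mapped edge by edge.  Such a map yields a
   tree decomposition as soon as it is monotone, every new edge lies in the
   image of an old edge, and each vertex x lies in [bag X] exactly when X meets
   a set Y_x of old vertices that is a singleton or inside an edge: then the
   subtrees of the vertices of Y_x pairwise meet, so their union is connected.
   For merging on v, a vertex x of the merged edge gets Y_x = {x, v}. *)

Section Subtrees.

Variables (I : finType) (t : rel I).

Definition subtree_rel (P : pred I) : rel I := [rel a b | t a b && P a && P b].

Lemma eq_subtree_connect (P Q : pred I) :
  P =1 Q -> connect (subtree_rel P) =2 connect (subtree_rel Q).
Proof. by move=> PQ; apply: eq_connect => a b; rewrite /subtree_rel /= !PQ. Qed.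

Lemma sub_subtree_connect (P Q : pred I) :
  {subset P <= Q} -> subrel (connect (subtree_rel P)) (connect (subtree_rel Q)).
Proof.
move=> PQ; apply: connect_sub => a b /andP[/andP[tab Pa] Pb].
by apply: connect1; rewrite /subtree_rel /= tab; apply/andP; split; exact: PQ.
Qed.

End Subtrees.

Definition edge_contained (T : finType) (H : hypergraph T) (Y : {set T}) : Prop :=
  Y \subset hvert H /\ (#|Y| <= 1 \/ exists2 e, e \in hedge H & Y \subset e).

Lemma edge_contained1 (T : finType) (H : hypergraph T) x :
  x \in hvert H -> edge_contained H [set x].
Proof. by rewrite /edge_contained sub1set cards1 => xV; split=> //; left. Qed.

Section ExistsInSet.

Variables (T : finType) (P : pred T).

Lemma exists_in_set0 : [exists y in set0, P y] = false.
Proof. by apply/exists_inP => -[y]; rewrite inE. Qed.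

Lemma exists_in_set1 x : [exists y in [set x], P y] = P x.
Proof. by apply/exists_inP/idP => [[y /set1P-> //] | Px]; exists x; rewrite ?set11. Qed.

Lemma exists_in_setU (A B : {set T}) :
  [exists y in A :|: B, P y] = [exists y in A, P y] || [exists y in B, P y].
Proof.
apply/exists_inP/orP => [[y /setUP[] yAB Py] | [] /exists_inP[y yAB Py]].
- by left; apply/exists_inP; exists y.
- by right; apply/exists_inP; exists y.
- by exists y => //; rewrite in_setU yAB ?orbT.
- by exists y => //; rewrite in_setU yAB ?orbT.
Qed.

End ExistsInSet.

Section TreeDecomposition.

Variables (T : finType) (H : hypergraph T) (I : finType) (t : rel I).
Variable B : I -> {set T}.
Hypothesis tdB : tree_decomposition H t B.

Lemma td_connect_through (P : pred I) (y z : T) (u w u0 : I) :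
  y \in hvert H -> z \in hvert H ->
  {subset [pred a | y \in B a] <= P} -> {subset [pred a | z \in B a] <= P} ->
  y \in B u -> z \in B w -> y \in B u0 -> z \in B u0 ->
  connect (subtree_rel t P) u w.
Proof.
case: tdB => _ _ _ conB yV zV yP zP yu zw yu0 zu0.
apply: (@connect_trans _ _ u0).
  exact: sub_subtree_connect yP _ _ (conB y yV u u0 yu yu0).
exact: sub_subtree_connect zP _ _ (conB z zV u0 w zu0 zw).
Qed.

Lemma td_connect_meet (Y : {set T}) : edge_contained H Y ->
  forall u w, [exists y in Y, y \in B u] -> [exists y in Y, y \in B w] ->
  connect (subtree_rel t [pred a | [exists y in Y, y \in B a]]) u w.
Proof.
move=> [YV Ysmall] u w /exists_inP[y yY yu] /exists_inP[z zY zw].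
have memP x : x \in Y ->
    {subset [pred a | x \in B a] <= [pred a | [exists y in Y, y \in B a]]}.
  by move=> xY a xa; apply/exists_inP; exists x.
have [u0 yu0 zu0] : exists2 u0, y \in B u0 & z \in B u0.
  case: Ysmall => [/card_le1_eqP Y1 | [e eE Ye]].
    by exists u; rewrite // (Y1 y z yY zY).
  case: tdB => _ _ /(_ e eE)[u0 eu0] _.
  by exists u0; apply: (subsetP eu0); apply: (subsetP Ye).
exact: (td_connect_through (subsetP YV y yY) (subsetP YV z zY) (memP y yY) (memP z zY)
          yu zw yu0 zu0).
Qed.

End TreeDecomposition.

Section BagMap.

Variables (T T' : finType) (H : hypergraph T) (H' : hypergraph T').
Variables (bag : {set T} -> {set T'}) (edge_map : {set T} -> {set T'}).

Hypothesis bag_vert : forall X : {set T}, X \subset hvert H -> bag X \subset hvert H'.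
Hypothesis bag_mono : {homo bag : X Y / X \subset Y}.
Hypothesis bag_edge : forall e', e' \in hedge H' -> e' != set0 ->
  exists2 e, e \in hedge H & e' \subset bag e.
Hypothesis bag_vertex : forall x, x \in hvert H' ->
  exists2 Y : {set T}, edge_contained H Y &
    forall X : {set T}, (x \in bag X) = [exists y in Y, y \in X].
Hypothesis edge_map_edge : {in hedge H, forall e, edge_map e \in hedge H'}.
Hypothesis bag_cover : forall (X : {set T}) (F : {set {set T}}),
  F \subset hedge H -> X \subset cover F -> bag X \subset \bigcup_(e in F) edge_map e.

Lemma tree_decomposition_bag_map (I : finType) (t : rel I) (B : I -> {set T}) :
  tree_decomposition H t B -> tree_decomposition H' t (fun u => bag (B u)).
Proof.
move=> tdB; case: (tdB) => tr subB covB _; split=> // [u | e' e'E | x xV u w].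
- exact: bag_vert.
- have [->|e'0] := eqVneq e' set0.
    by case: tr => /card_gt0P[u _] _ _ _ _; exists u; apply: sub0set.
  have [e eE e'e] := bag_edge e'E e'0; have [u eu] := covB e eE.
  by exists u; apply: subset_trans e'e (bag_mono eu).
have [Y YH memY] := bag_vertex xV.
rewrite !memY => xu xw.
rewrite (eq_subtree_connect t (P := fun a => x \in bag (B a)) (fun a => memY (B a))).
exact: (td_connect_meet tdB YH).
Qed.

Lemma rho_le_bag_map X k : rho_le H X k -> rho_le H' (bag X) k.
Proof.
case=> F [FE Fk XF]; exists (edge_map @: F); split.
- by apply/subsetP => _ /imsetP[e eF ->]; apply: edge_map_edge; apply: (subsetP FE).
- exact: leq_trans (leq_imset_card _ _) Fk.
apply: subset_trans (bag_cover FE XF) _; apply/subsetP => y /bigcupP[e eF ye].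
by apply/bigcupP; exists (edge_map e); first exact: imset_f.
Qed.

Lemma ghw_le_bag_map k : ghw_le H k -> ghw_le H' k.
Proof.
case=> I [t [B [tdB rhoB]]]; exists I, t, (fun u => bag (B u)); split.
  exact: tree_decomposition_bag_map.
by move=> u; apply: rho_le_bag_map.
Qed.

End BagMap.

Section Operations.

Variables (T : finType) (H : hypergraph T).

Lemma ghw_le_delete_vertex v k : ghw_le H k -> ghw_le (delete_vertex H v) k.
Proof.
apply: (ghw_le_bag_map (bag := fun X => X :\ v) (edge_map := fun e => e :\ v)).
- by move=> X XV; apply: setSD.
- by move=> X Y XY; apply: setSD.
- by move=> _ /imsetP[e eE ->] _; exists e.
- move=> x /setD1P[xv xV]; exists [set x]; first exact: edge_contained1.
  by move=> X; rewrite in_setD1 xv exists_in_set1.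
- by move=> e eE; apply: imset_f.
move=> X F _ XF; apply/subsetP => x /setD1P[xv /(subsetP XF)/bigcupP[e eF xe]].
by apply/bigcupP; exists e; rewrite // in_setD1 xv.
Qed.

Lemma ghw_le_delete_edge (e f : {set T}) k :
  f \in hedge H -> e \proper f -> ghw_le H k -> ghw_le (delete_edge H e) k.
Proof.
move=> fE ef; have fe : f != e by apply: contraTneq ef => ->; rewrite properxx.
apply: (ghw_le_bag_map (bag := id) (edge_map := fun g => if g == e then f else g)).
- by [].
- by [].
- by move=> g /setD1P[_ gE] _; exists g.
- by move=> x xV; exists [set x]; [exact: edge_contained1 | move=> X; rewrite exists_in_set1].
- by move=> g gE /=; case: eqP => [_|/eqP ge]; rewrite in_setD1 ?fe ?ge.
move=> X F _ XF; apply/subsetP => x /(subsetP XF)/bigcupP[g gF xg].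
apply/bigcupP; exists g => //; case: eqP => // ge.
by apply: (subsetP (proper_sub ef)); rewrite -ge.
Qed.

Definition merged_edge (v : T) : {set T} := (\bigcup_(e in incident H v) e) :\ v.

Lemma merged_edgeP v x :
  reflect (x != v /\ exists2 e, e \in hedge H & v \in e /\ x \in e) (x \in merged_edge v).
Proof.
apply: (iffP setD1P) => [[xv /bigcupP[e]] | [xv [e eE [ve xe]]]].
  by rewrite inE => /andP[eE ve] xe; split=> //; exists e.
by split=> //; apply/bigcupP; exists e; rewrite ?inE ?eE.
Qed.

Definition merge_bag v (X : {set T}) : {set T} :=
  if v \in X then X :\ v :|: merged_edge v else X.

Lemma merge_bag_mono v : {homo merge_bag v : X Y / X \subset Y}.
Proof.
move=> X Y XY; rewrite /merge_bag; case: ifPn => vX.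
  by rewrite (subsetP XY v vX); apply: setSU; apply: setSD.
case: ifP => _ //; apply: subset_trans (subsetUl _ _).
apply/subsetP => x xX; rewrite in_setD1 (subsetP XY _ xX) andbT.
by apply: contraNneq vX => <-.
Qed.

Lemma merge_bag_notin v X : v \notin merge_bag v X.
Proof. by rewrite /merge_bag; case: ifPn => // _; rewrite !inE eqxx. Qed.

Lemma mem_merge_bag v x X : x != v ->
  (x \in merge_bag v X) = (x \in X) || (v \in X) && (x \in merged_edge v).
Proof. by move=> xv; rewrite /merge_bag; case: ifP; rewrite ?in_setU ?in_setD1 ?xv ?orbF. Qed.

Hypothesis wfH : wf_hypergraph H.

Lemma merged_edge_sub v : merged_edge v \subset hvert H.
Proof. by apply/subsetP => x /merged_edgeP[_ [e eE [_ xe]]]; apply: (subsetP (wfH eE)). Qed.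

Lemma ghw_le_merge_vertex v k : ghw_le H k -> ghw_le (merge_vertex H v) k.
Proof.
set m := merged_edge v.
apply: (ghw_le_bag_map (bag := merge_bag v) (edge_map := fun g => if v \in g then m else g)).
- move=> X XV; rewrite /merge_bag; case: ifP => // _.
  by rewrite subUset merged_edge_sub andbT; apply: subset_trans (subD1set _ _) XV.
- exact: merge_bag_mono.
- move=> e'; rewrite in_setU => /orP[/setDP[e'E] | /set1P-> m0].
    rewrite inE e'E /= => ve'; by exists e' => //; rewrite /merge_bag (negbTE ve').
  have [x /merged_edgeP[_ [e eE [ve _]]]] := set0Pn _ m0.
  by exists e => //; rewrite /merge_bag ve subsetUr.
- move=> x xV; have [-> | xv] := eqVneq x v.
    exists set0; first by split; [exact: sub0set | left; rewrite cards0].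
    by move=> X; rewrite exists_in_set0 (negbTE (merge_bag_notin v X)).
  have [xm | xnm] := boolP (x \in m); last first.
    exists [set x]; first exact: edge_contained1.
    by move=> X; rewrite mem_merge_bag // exists_in_set1 (negbTE xnm) andbF orbF.
  case/merged_edgeP: (xm) => _ [e eE [ve xe]]; exists [set x; v].
    split; [apply: subset_trans (wfH eE) | right; exists e => //];
      by apply/subsetP => y /set2P[]->.
  by move=> X; rewrite mem_merge_bag // exists_in_setU !exists_in_set1 xm andbT.
- move=> g gE /=; apply/setUP; case: ifP => vg; [right | left].
    exact: set11.
  by apply/setDP; split=> //; rewrite inE vg andbF.
move=> X F FE XF; apply/subsetP => x xX.
have xv : x != v by apply: contraTneq xX => ->; apply: merge_bag_notin.
move: xX; rewrite mem_merge_bag // => /orP[/(subsetP XF)/bigcupP[g gF xg] | /andP[vX xm]].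
  apply/bigcupP; exists g => //; case: ifP => // vg; apply/merged_edgeP; split=> //.
  by exists g; first exact: (subsetP FE).
have /bigcupP[g gF vg] := subsetP XF v vX.
by apply/bigcupP; exists g => //; rewrite vg.
Qed.

End Operations.

Lemma preim_imset_on (T1 T2 : finType) (f : T1 -> T2) (V e : {set T1}) :
  {in V &, injective f} -> e \subset V -> V :&: f @^-1: (f @: e) = e.
Proof.
move=> finj eV; apply/setP => x; rewrite !inE.
apply/andP/idP => [[xV /imsetP[y ye fxy]] | xe]; last by rewrite (subsetP eV) ?imset_f.
by rewrite (finj x y xV (subsetP eV y ye) fxy).
Qed.

Lemma ghw_le_iso (T1 T2 : finType) (H1 : hypergraph T1) (H2 : hypergraph T2) k :
  wf_hypergraph H1 -> hg_iso H1 H2 -> ghw_le H2 k -> ghw_le H1 k.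
Proof.
move=> wf1 [f [finj [fV fE]]].
pose pull (X : {set T2}) := hvert H1 :&: f @^-1: X.
apply: (ghw_le_bag_map (bag := pull) (edge_map := pull)).
- by move=> X _; apply: subsetIl.
- by move=> X Y XY; apply: setIS; apply: preimsetS.
- move=> e eE _; exists (f @: e); first by rewrite fE imset_f.
  by rewrite /pull preim_imset_on ?wf1.
- move=> x xV; exists [set f x]; first by apply: edge_contained1; rewrite -fV imset_f.
  by move=> X; rewrite exists_in_set1 !inE xV.
- by move=> g; rewrite fE => /imsetP[e eE ->]; rewrite /pull preim_imset_on ?wf1.
move=> X F _ XF; apply/subsetP => x; rewrite !inE => /andP[xV /(subsetP XF)/bigcupP[g gF fxg]].
by apply/bigcupP; exists g; rewrite ?inE ?xV.
Qed.

Lemma wf_dilution_step (T : finType) (H1 H2 : hypergraph T) :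
  dilution_step H1 H2 -> wf_hypergraph H1 -> wf_hypergraph H2.
Proof.
case=> {H1 H2} [H v _ | H e f _ _ _ | H v _] wfH e'.
- by case/imsetP=> e eE ->; apply: setSD (wfH e eE).
- by case/setD1P=> _; apply: wfH.
- case/setUP=> [/setDP[eE _] | /set1P->]; first exact: wfH.
  exact: merged_edge_sub.
Qed.

Lemma ghw_le_dilution_step (T : finType) (H1 H2 : hypergraph T) k :
  dilution_step H1 H2 -> wf_hypergraph H1 -> ghw_le H1 k -> ghw_le H2 k.
Proof.
case=> {H1 H2} [H v _ | H e f _ fE ef | H v _] wfH.
- exact: ghw_le_delete_vertex.
- exact: ghw_le_delete_edge fE ef.
- exact: ghw_le_merge_vertex.
Qed.

Lemma dilution_reachable_wf (T : finType) (H1 H2 : hypergraph T) :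
  dilution_reachable H1 H2 -> wf_hypergraph H1 -> wf_hypergraph H2.
Proof.
elim=> {H1 H2} [H1 H2 step | // | H1 H2 H3 _ IH12 _ IH23 wf1].
- exact: wf_dilution_step.
- exact: IH23 (IH12 wf1).
Qed.

Lemma ghw_le_dilution_reachable (T : finType) (H1 H2 : hypergraph T) k :
  dilution_reachable H1 H2 -> wf_hypergraph H1 -> ghw_le H1 k -> ghw_le H2 k.
Proof.
elim=> {H1 H2} [H1 H2 step | // | H1 H2 H3 r12 IH12 _ IH23 wf1].
- exact: ghw_le_dilution_step.
- by move/(IH12 wf1); apply: IH23; apply: dilution_reachable_wf r12 wf1.
Qed.

Theorem theorem3p2 (T T' : finType) (H : hypergraph T) (H' : hypergraph T') :
  wf_hypergraph H -> wf_hypergraph H' -> dilutes_to H' H ->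
  forall k : nat, ghw_le H' k -> ghw_le H k.
Proof.
move=> wfH wfH' [H'' [reach iso]] k ghwH'.
exact: ghw_le_iso wfH iso (ghw_le_dilution_reachable reach wfH' ghwH').
Qed.
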